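(* Let $G$ be a digraph and $f$ a discrete Morse function on $G$. Then for any allowed elementary path $v_0v_1\cdots v_n$ in $G$ there is at most one index $i\in\{0,\dots,n\}$ with $f(v_i)=0$.
   Context: A digraph $G=(V,E)$ consists of a set $V$ and $E\subseteq(V\times V)\setminus\{(v,v)\}$; $(u,v)\in E$ is written $u\to v$. An allowed elementary $n$-path is a sequence $v_0\cdots v_n$ of vertices with $v_{i-1}\to v_i\in E$ for $1\le i\le n$. A map $f:V\to[0,+\infty)$ is a discrete Morse function on $G$ if for every allowed elementary path $v_0\cdots v_n$: (i) there is at most one index $i$ with $f(v_i)=0$ such that $v_0\cdots v_{i-1}v_{i+1}\cdots v_n$ is an allowed elementary $(n-1)$-path; (ii) there is at most one vertex $u$ with $f(u)=0$ such that for some $-1\le j\le n$ the sequence $v_0\cdots v_juv_{j+1}\cdots v_n$ (meaning $uv_0\cdots v_n$ if $j=-1$, $v_0\cdots v_nu$ if $j=n$) is an allowed elementary $(n+1)$-path. *)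

From Stdlib Require Import Reals List Arith.
Import ListNotations.
Open Scope R_scope.

(* Allowed elementary path: every pair of consecutive vertices is an arrow.
   A list of length n+1 is an n-path; [] is the empty (-1)-path. *)
Fixpoint allowed {V : Type} (E : V -> V -> Prop) (p : list V) : Prop :=
  match p with
  | x :: ((y :: _) as t) => E x y /\ allowed E t
  | _ => True
  end.

Definition delete_at {V : Type} (i : nat) (p : list V) : list V :=
  firstn i p ++ skipn (S i) p.

(* insert u so that it sits at (list) position j, 0 <= j <= length p
   (j = 0 : u v_0 ... v_n ;  j = length p : v_0 ... v_n u) *)
Definition insert_at {V : Type} (j : nat) (u : V) (p : list V) : list V :=
  firstn j p ++ u :: skipn j p.

Definition digraph {V : Type} (E : V -> V -> Prop) : Prop :=
  forall v, ~ E v v.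

Definition is_discrete_morse {V : Type} (E : V -> V -> Prop) (f : V -> R) : Prop :=
  (forall v, 0 <= f v) /\
  (forall p : list V, p <> [] -> allowed E p ->
     (forall i1 i2 : nat,
        (exists v, nth_error p i1 = Some v /\ f v = 0) ->
        allowed E (delete_at i1 p) ->
        (exists v, nth_error p i2 = Some v /\ f v = 0) ->
        allowed E (delete_at i2 p) ->
        i1 = i2) /\
     (forall u1 u2 : V,
        f u1 = 0 -> (exists j, (j <= length p)%nat /\ allowed E (insert_at j u1 p)) ->
        f u2 = 0 -> (exists j, (j <= length p)%nat /\ allowed E (insert_at j u2 p)) ->
        u1 = u2)).

From Stdlib Require Import Reals List Arith Lia.
Import ListNotations.
Open Scope R_scope.

(* If v_i and v_j (i < j) both had value 0, cut out the subpath v_i ... v_j.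
   Dropping the first or the last vertex of an allowed path leaves an allowed
   path, and both dropped vertices have value 0, so condition (i) of a discrete
   Morse function identifies the two positions 0 and j - i: contradiction. *)

Section AllowedPaths.

Variables (V : Type) (E : V -> V -> Prop).

Lemma allowed_cons_inv (x : V) (l : list V) : allowed E (x :: l) -> allowed E l.
Proof. destruct l; simpl; tauto. Qed.

Lemma allowed_skipn (n : nat) (l : list V) : allowed E l -> allowed E (skipn n l).
Proof.
  revert l; induction n as [|n IH]; intros l Hl; [exact Hl |].
  destruct l as [|x l]; simpl; [exact I |].
  apply IH, (allowed_cons_inv x), Hl.
Qed.

Lemma allowed_firstn (n : nat) (l : list V) : allowed E l -> allowed E (firstn n l).
Proof.
  revert n; induction l as [|x l IH]; intros n Hl; destruct n as [|n]; simpl; try exact I.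
  destruct n as [|n], l as [|y l]; simpl; try exact I.
  destruct Hl as [Hxy Hl]; split; [exact Hxy |].
  exact (IH (S n) Hl).
Qed.

Lemma allowed_delete_first (l : list V) : allowed E l -> allowed E (delete_at 0 l).
Proof. apply allowed_skipn. Qed.

Lemma allowed_delete_last (l : list V) :
  allowed E l -> allowed E (delete_at (length l - 1) l).
Proof.
  intro Hl; unfold delete_at.
  rewrite skipn_all2 by lia; rewrite app_nil_r.
  apply allowed_firstn, Hl.
Qed.

Definition subpath (i j : nat) (p : list V) : list V := firstn (S (j - i)) (skipn i p).

Lemma allowed_subpath (i j : nat) (p : list V) : allowed E p -> allowed E (subpath i j p).
Proof. intro Hp; apply allowed_firstn, allowed_skipn, Hp. Qed.

Lemma length_subpath (i j : nat) (p : list V) :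
  (i <= j < length p)%nat -> length (subpath i j p) = S (j - i).
Proof. intro Hij; unfold subpath; rewrite length_firstn, length_skipn; lia. Qed.

Lemma nth_error_subpath (i j k : nat) (p : list V) :
  (k <= j - i)%nat -> nth_error (subpath i j p) k = nth_error p (i + k).
Proof.
  intro Hk; unfold subpath.
  rewrite nth_error_firstn, (proj2 (Nat.ltb_lt k (S (j - i)))) by lia.
  apply nth_error_skipn.
Qed.

End AllowedPaths.

Lemma morse_zero_endpoints_length1 (V : Type) (E : V -> V -> Prop) (f : V -> R)
  (hf : is_discrete_morse E f) (q : list V) (a b : V) :
  allowed E q ->
  nth_error q 0 = Some a -> f a = 0 ->
  nth_error q (length q - 1) = Some b -> f b = 0 ->
  length q = 1%nat.
Proof.
  intros Hq Ha fa Hb fb.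
  assert (Hne : q <> []) by (intro Hnil; rewrite Hnil in Ha; discriminate).
  destruct hf as [_ hf]; destruct (hf q Hne Hq) as [hdelete _].
  assert (Hfirst_last : 0%nat = (length q - 1)%nat).
  { apply hdelete.
    - exists a; split; assumption.
    - apply allowed_delete_first, Hq.
    - exists b; split; assumption.
    - apply allowed_delete_last, Hq. }
  destruct q; [contradiction | simpl in *; lia].
Qed.

Lemma morse_zero_positions_not_lt (V : Type) (E : V -> V -> Prop) (f : V -> R)
  (hf : is_discrete_morse E f) (p : list V) (i j : nat) :
  allowed E p -> (i < j)%nat ->
  (exists v, nth_error p i = Some v /\ f v = 0) ->
  (exists v, nth_error p j = Some v /\ f v = 0) -> False.
Proof.
  intros Hp Hij [a [Ha fa]] [b [Hb fb]].
  assert (Hj : (j < length p)%nat) by (apply nth_error_Some; congruence).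
  set (q := subpath V i j p).
  assert (Hlen : length q = S (j - i)) by (apply length_subpath; lia).
  assert (Hq_first : nth_error q 0 = Some a).
  { unfold q; rewrite nth_error_subpath by lia; rewrite Nat.add_0_r; exact Ha. }
  assert (Hq_last : nth_error q (length q - 1) = Some b).
  { rewrite Hlen; unfold q; rewrite nth_error_subpath by lia.
    replace (i + (S (j - i) - 1))%nat with j by lia; exact Hb. }
  pose proof (morse_zero_endpoints_length1 V E f hf q a b
                (allowed_subpath V E i j p Hp) Hq_first fa Hq_last fb).
  lia.
Qed.

Theorem lemma4p3 (V : Type) (E : V -> V -> Prop) (f : V -> R)
  (hG : digraph E) (hf : is_discrete_morse E f) :
  forall p : list V, p <> [] -> allowed E p ->
  forall i1 i2 : nat,
    (exists v, nth_error p i1 = Some v /\ f v = 0) ->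
    (exists v, nth_error p i2 = Some v /\ f v = 0) ->
    i1 = i2.
Proof.
  intros p _ Hp i1 i2 H1 H2.
  destruct (lt_eq_lt_dec i1 i2) as [[Hlt | Heq] | Hgt]; [| exact Heq |]; exfalso.
  - exact (morse_zero_positions_not_lt V E f hf p i1 i2 Hp Hlt H1 H2).
  - exact (morse_zero_positions_not_lt V E f hf p i2 i1 Hp Hgt H2 H1).
Qed.
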